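(* Let $M$ be a monoid with finitely many left ideals and finitely many right ideals. Then $M$ is residually finite if and only if all Schützenberger groups $\Gamma(H)$, for $H$ ranging over the $\mathcal{H}$-classes of $M$, are residually finite.
   Context: Green's relations: $x\mathcal{R}y$ iff $xM=yM$, $x\mathcal{L}y$ iff $Mx=My$, $\mathcal{H}=\mathcal{R}\cap\mathcal{L}$. For an $\mathcal{H}$-class $H$, $\mathrm{Stab}(H)=\{s\in M:Hs=H\}$, $\sigma=\{(x,y)\in\mathrm{Stab}(H)^2:hx=hy \text{ for all } h\in H\}$, and the Schützenberger group of $H$ is the group $\Gamma(H)=\mathrm{Stab}(H)/\sigma$. A monoid/group is residually finite if distinct elements are separated by homomorphisms to finite monoids/groups. No regularity of $M$ is assumed. *)

From Stdlib Require Import List.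
Set Implicit Arguments.

Record monoid := Monoid {
  carrier :> Type;
  mop : carrier -> carrier -> carrier;
  mone : carrier;
  mopA : forall x y z, mop x (mop y z) = mop (mop x y) z;
  mop1l : forall x, mop mone x = x;
  mop1r : forall x, mop x mone = x
}.
Arguments mop {m} _ _.
Arguments mone {m}.

Definition finite_type (T : Type) : Prop := exists l : list T, forall x, In x l.

Definition finite_monoid (N : monoid) : Prop := finite_type N.

Definition is_group (G : monoid) : Prop :=
  forall g : G, exists g' : G, mop g g' = mone /\ mop g' g = mone.

Definition monoid_hom {M N : monoid} (f : M -> N) : Prop :=
  f mone = mone /\ forall x y, f (mop x y) = mop (f x) (f y).

Definition residually_finite_monoid (M : monoid) : Prop :=
  forall x y : M, x <> y ->
    exists (N : monoid) (f : M -> N),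
      finite_monoid N /\ monoid_hom f /\ f x <> f y.

Definition subset_eq {M : monoid} (A B : M -> Prop) : Prop := forall z, A z <-> B z.

Definition finitely_many {M : monoid} (P : (M -> Prop) -> Prop) : Prop :=
  exists l : list (M -> Prop), forall I, P I -> exists J, In J l /\ subset_eq I J.

Definition left_ideal {M : monoid} (I : M -> Prop) : Prop :=
  (exists x, I x) /\ forall (m x : M), I x -> I (mop m x).
Definition right_ideal {M : monoid} (I : M -> Prop) : Prop :=
  (exists x, I x) /\ forall (m x : M), I x -> I (mop x m).

Definition greenR {M : monoid} (x y : M) : Prop :=
  forall z, (exists u, z = mop x u) <-> (exists u, z = mop y u).
Definition greenL {M : monoid} (x y : M) : Prop :=
  forall z, (exists u, z = mop u x) <-> (exists u, z = mop u y).
Definition greenH {M : monoid} (x y : M) : Prop := greenR x y /\ greenL x y.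

(* The H-class of a (every H-class is of this form). *)
Definition Hclass {M : monoid} (a : M) : M -> Prop := fun x => greenH x a.

Definition Stab {M : monoid} (H : M -> Prop) (s : M) : Prop :=
  forall z, (exists h, H h /\ z = mop h s) <-> H z.

Definition schsigma {M : monoid} (H : M -> Prop) (x y : M) : Prop :=
  Stab H x /\ Stab H y /\ forall h, H h -> mop h x = mop h y.

(* A homomorphism Gamma(H) = Stab(H)/sigma -> G, presented (via the universal
   property of the quotient) as a map on representatives: a monoid
   homomorphism of the submonoid Stab(H) into G that is constant on
   sigma-classes. *)
Definition schutz_hom {M : monoid} (H : M -> Prop) {G : monoid} (phi : M -> G)
  : Prop :=
  phi mone = mone /\
  (forall s t, Stab H s -> Stab H t -> phi (mop s t) = mop (phi s) (phi t)) /\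
  (forall s t, schsigma H s t -> phi s = phi t).

Definition schutz_residually_finite {M : monoid} (H : M -> Prop) : Prop :=
  forall x y, Stab H x -> Stab H y -> ~ schsigma H x y ->
    exists (G : monoid) (phi : M -> G),
      finite_monoid G /\ is_group G /\ schutz_hom H phi /\ phi x <> phi y.

(* If [M] is residually finite and [x], [y] in [Stab(H_a)] are not [sigma]-related,
   then [a x <> a y]. A homomorphism [f] to a finite monoid separating [a x] and [a y]
   induces the congruence [f (a s) = f (a t)] on [Stab(H_a)]; the quotient is finite,
   every element has a left inverse (so it is a group), and [Gamma(H_a)] maps onto it.

   Conversely, given [a] and [psi : Gamma(H_a) -> G] with [G] finite, let [psi_ext]
   map [a g] to [psi g] on [H_a] and be undefined elsewhere. The syntactic congruence
   of [psi_ext] has finite index: [psi_ext (u w)] depends only on the left ideal [M u]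
   and on the values of [psi_ext] at the [t m_K], where [u = t b] for a fixed generator
   [b] of [M u] and [m_K] is a fixed generator, in the L-class of [a], of each of the
   finitely many right ideals [K]. Indeed, if [b w] lies in that L-class then it is
   H-equivalent to [m_K] for [K = b w M], so [b w = m_K g] with [g] in [Stab(H_a)] and
   [psi_ext (t b w) = psi_ext (t m_K) psi(g)]. To separate [x <> y] take [a = x], and,
   if [y = x s] lies in [H_x], a [psi] separating the classes of [1] and [s]. *)

From Stdlib Require Import List Classical ClassicalEpsilon FunctionalExtensionality PropExtensionality ProofIrrelevance.
Import ListNotations.

Notation "x ** y" := (mop x y) (at level 40, left associativity).
Arguments mopA {m}.
Arguments mop1l {m}.
Arguments mop1r {m}.

Ltac monoid_assoc := rewrite ?mopA; reflexivity.

Section Green.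
Context {M : monoid}.

Definition R_eq (x y : M) : Prop := (exists c, x = y ** c) /\ (exists d, y = x ** d).
Definition L_eq (x y : M) : Prop := (exists p, x = p ** y) /\ (exists q, y = q ** x).

Definition left_principal (x : M) : M -> Prop := fun z => exists v, z = v ** x.
Definition right_principal (x : M) : M -> Prop := fun z => exists c, z = x ** c.

Lemma greenR_iff x y : greenR x y <-> R_eq x y.
Proof.
  split.
  - intro h. split.
    + destruct (proj1 (h x) (ex_intro _ mone (eq_sym (mop1r x)))) as [u hu]. eauto.
    + destruct (proj2 (h y) (ex_intro _ mone (eq_sym (mop1r y)))) as [u hu]. eauto.
  - intros [[c hc] [d hd]] z. split; intros [u hu]; subst z.
    + exists (c ** u). rewrite hc. monoid_assoc.
    + exists (d ** u). rewrite hd. monoid_assoc.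
Qed.

Lemma greenL_iff x y : greenL x y <-> L_eq x y.
Proof.
  split.
  - intro h. split.
    + destruct (proj1 (h x) (ex_intro _ mone (eq_sym (mop1l x)))) as [u hu]. eauto.
    + destruct (proj2 (h y) (ex_intro _ mone (eq_sym (mop1l y)))) as [u hu]. eauto.
  - intros [[c hc] [d hd]] z. split; intros [u hu]; subst z.
    + exists (u ** c). rewrite hc. monoid_assoc.
    + exists (u ** d). rewrite hd. monoid_assoc.
Qed.

Lemma Hclass_iff (a z : M) : Hclass a z <-> R_eq z a /\ L_eq z a.
Proof. unfold Hclass, greenH. rewrite greenR_iff, greenL_iff. tauto. Qed.

Lemma R_eq_refl x : R_eq x x.
Proof. split; exists mone; symmetry; apply mop1r. Qed.

Lemma L_eq_refl x : L_eq x x.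
Proof. split; exists mone; symmetry; apply mop1l. Qed.

Lemma R_eq_sym x y : R_eq x y -> R_eq y x.
Proof. unfold R_eq; tauto. Qed.

Lemma L_eq_sym x y : L_eq x y -> L_eq y x.
Proof. unfold L_eq; tauto. Qed.

Lemma R_eq_trans x y z : R_eq x y -> R_eq y z -> R_eq x z.
Proof.
  intros [[c1 h1] [d1 e1]] [[c2 h2] [d2 e2]]. split.
  - exists (c2 ** c1). rewrite h1, h2. monoid_assoc.
  - exists (d1 ** d2). rewrite e2, e1. monoid_assoc.
Qed.

Lemma L_eq_trans x y z : L_eq x y -> L_eq y z -> L_eq x z.
Proof.
  intros [[c1 h1] [d1 e1]] [[c2 h2] [d2 e2]]. split.
  - exists (c1 ** c2). rewrite h1, h2. monoid_assoc.
  - exists (d2 ** d1). rewrite e2, e1. monoid_assoc.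
Qed.

Lemma L_eq_mulr x y c : L_eq x y -> L_eq (x ** c) (y ** c).
Proof.
  intros [[p hp] [q hq]]. split.
  - exists p. rewrite hp. monoid_assoc.
  - exists q. rewrite hq. monoid_assoc.
Qed.

Lemma R_eq_mull x y c : R_eq x y -> R_eq (c ** x) (c ** y).
Proof.
  intros [[d hd] [e he]]. split.
  - exists d. rewrite hd. monoid_assoc.
  - exists e. rewrite he. monoid_assoc.
Qed.

Lemma left_principal_ideal x : left_ideal (left_principal x).
Proof.
  split.
  - exists x, mone. symmetry; apply mop1l.
  - intros m z [v ->]. exists (m ** v). monoid_assoc.
Qed.

Lemma right_principal_ideal x : right_ideal (right_principal x).
Proof.
  split.
  - exists x, mone. symmetry; apply mop1r.
  - intros m z [c ->]. exists (c ** m). monoid_assoc.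
Qed.

Lemma Hclass_refl (a : M) : Hclass a a.
Proof. apply Hclass_iff. split; [apply R_eq_refl | apply L_eq_refl]. Qed.

Lemma Hclass_eq {a z w : M} : Hclass a z -> Hclass z w <-> Hclass a w.
Proof.
  rewrite !Hclass_iff. intros [hR hL].
  split; intros [hR' hL']; split.
  - apply R_eq_trans with z; assumption.
  - apply L_eq_trans with z; assumption.
  - apply R_eq_trans with a; [assumption | apply R_eq_sym; assumption].
  - apply L_eq_trans with a; [assumption | apply L_eq_sym; assumption].
Qed.

Lemma Hclass_mulr (a g g' h : M) : L_eq (a ** g) a -> a ** g ** g' = a -> Hclass a h ->
  Hclass a (h ** g) /\ h ** g ** g' = h.
Proof.
  intros hLg hgg' hh. apply Hclass_iff in hh as [hR hL].
  assert (back : h ** g ** g' = h).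
  { destruct hL as [[p ->] _]. rewrite <- !mopA, (mopA a g g'), hgg'. reflexivity. }
  split; [|exact back].
  apply Hclass_iff. split.
  - apply R_eq_trans with h; [|exact hR].
    split; [exists g; reflexivity | exists g'; symmetry; exact back].
  - apply L_eq_trans with (a ** g); [apply L_eq_mulr |]; assumption.
Qed.

End Green.

Section Stabilizer.
Context {M : monoid} (a : M).
Local Notation H := (Hclass a).

Lemma Stab_one : Stab H mone.
Proof.
  intro z. split.
  - intros [h [hh ->]]. rewrite mop1r. exact hh.
  - intro hz. exists z. split; [exact hz | symmetry; apply mop1r].
Qed.

Lemma Stab_mulr s h : Stab H s -> H h -> H (h ** s).
Proof. intros hs hh. apply (hs (h ** s)). eauto. Qed.

Lemma Stab_mul s t : Stab H s -> Stab H t -> Stab H (s ** t).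
Proof.
  intros hs ht z. split.
  - intros [h [hh ->]]. rewrite mopA. apply Stab_mulr; [|apply Stab_mulr]; assumption.
  - intro hz. destruct (proj2 (ht z) hz) as [h1 [hh1 ->]].
    destruct (proj2 (hs h1) hh1) as [h2 [hh2 ->]].
    exists h2. split; [exact hh2 | monoid_assoc].
Qed.

Lemma Hclass_stab_decomp {z} : H z -> exists g, Stab H g /\ z = a ** g.
Proof.
  intro hz. pose proof hz as hz'. apply Hclass_iff in hz' as [[[g eg] [g' eg']] hL].
  exists g. split; [|exact eg].
  intro w. split.
  - intros [h [hh ->]].
    apply (Hclass_mulr a g g'); [rewrite <- eg | rewrite <- eg, <- eg'; reflexivity |];
      assumption.
  - intro hw. apply (Hclass_eq hz) in hw.
    destruct (Hclass_mulr z g' g w) as [hwg' back].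
    { rewrite <- eg'. apply L_eq_sym. exact hL. }
    { rewrite <- eg', <- eg. reflexivity. }
    { exact hw. }
    exists (w ** g'). split; [apply (Hclass_eq hz); exact hwg' | symmetry; exact back].
Qed.

Lemma schsigma_of_eq g g' : Stab H g -> Stab H g' -> a ** g = a ** g' -> schsigma H g g'.
Proof.
  intros hg hg' e. split; [|split]; try assumption.
  intros h hh. apply Hclass_iff in hh as [_ [[p ->] _]].
  rewrite <- !mopA, e. reflexivity.
Qed.

End Stabilizer.

Lemma finite_image_representatives {A B : Type} (P : A -> Prop) (f : A -> B) (lB : list B) :
  (forall x, P x -> In (f x) lB) ->
  exists reps : list A, (forall r, In r reps -> P r) /\
    forall x, P x -> exists r, In r reps /\ f x = f r.
Proof.
  intro hf.
  enough (gen : forall l : list B, exists reps : list A, (forall r, In r reps -> P r) /\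
    forall x, P x -> In (f x) l -> exists r, In r reps /\ f x = f r).
  { destruct (gen lB) as [reps [hP hr]]. exists reps. split; auto. }
  induction l as [|b l [reps [hP hr]]].
  - exists []. split; [intros r [] | intros x _ []].
  - destruct (classic (exists x0, P x0 /\ f x0 = b)) as [[x0 [hx0 e0]] | nb].
    + exists (x0 :: reps). split.
      * intros r [<- | hin]; auto.
      * intros x hx [e | hin].
        -- exists x0. split; [left; reflexivity | congruence].
        -- destruct (hr x hx hin) as [r [hin' e]]. exists r. split; [right |]; assumption.
    + exists reps. split; [exact hP |]. intros x hx [e | hin].
      * exfalso. apply nb. exists x. auto.
      * auto.
Qed.

Fixpoint lists_of_length {S : Type} (n : nat) (lS : list S) : list (list S) :=
  match n with
  | O => [[]]
  | Datatypes.S n' => flat_map (fun x => map (cons x) (lists_of_length n' lS)) lS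
  end.

Lemma lists_of_length_complete {S : Type} (lS l : list S) :
  (forall x, In x l -> In x lS) -> In l (lists_of_length (length l) lS).
Proof.
  induction l as [|x l IH]; intro h; simpl.
  - left; reflexivity.
  - apply in_flat_map. exists x. split.
    + apply h. left; reflexivity.
    + apply in_map, IH. intros y hy. apply h. right; exact hy.
Qed.

Lemma left_invertible_is_group (G : monoid) :
  (forall g : G, exists g', g' ** g = mone) -> is_group G.
Proof.
  intros hinv g. destruct (hinv g) as [g' e1]. destruct (hinv g') as [g'' e2].
  exists g'. split; [|exact e1].
  transitivity (g'' ** g' ** (g ** g')).
  - rewrite e2, mop1l. reflexivity.
  - rewrite <- mopA, (mopA g' g g'), e1, mop1l. exact e2.
Qed.

Record submonoid_congruence {M : monoid} (P : M -> Prop) (E : M -> M -> Prop) : Prop := {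
  cong_one : P mone;
  cong_mul : forall {x y}, P x -> P y -> P (x ** y);
  cong_refl : forall {x}, P x -> E x x;
  cong_sym : forall {x y}, E x y -> E y x;
  cong_trans : forall {x} y {z}, E x y -> E y z -> E x z;
  cong_dom : forall {x y}, E x y -> P x;
  cong_compat : forall {x y z w}, E x y -> E z w -> E (x ** z) (y ** w)
}.

Section Quotient.
Context {M : monoid} {P : M -> Prop} {E : M -> M -> Prop}.
Hypothesis hE : submonoid_congruence P E.

Local Notation P_one := (cong_one _ _ hE).
Local Notation P_mul := (cong_mul _ _ hE).
Local Notation E_refl := (cong_refl _ _ hE).
Local Notation E_sym := (cong_sym _ _ hE).
Local Notation E_trans := (cong_trans _ _ hE).
Local Notation E_dom := (cong_dom _ _ hE).
Local Notation E_congr := (cong_compat _ _ hE).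

Definition rep (z : M) : M := epsilon (inhabits mone) (fun r => E r z).

Lemma rep_spec {z} : P z -> E (rep z) z.
Proof.
  intro hz. apply (epsilon_spec (inhabits mone) (fun r => E r z)). exists z. exact (E_refl hz).
Qed.

Lemma rep_congr {z z'} : E z z' -> rep z = rep z'.
Proof.
  intro e. unfold rep. f_equal. apply functional_extensionality. intro r.
  apply propositional_extensionality.
  split; intro h; [exact (E_trans _ h e) | exact (E_trans _ h (E_sym e))].
Qed.

Lemma rep_dom {z} : P z -> P (rep z).
Proof. intro hz. exact (E_dom (rep_spec hz)). Qed.

Lemma rep_idem {z} : P z -> rep (rep z) = rep z.
Proof. intro hz. apply rep_congr, rep_spec, hz. Qed.

Definition quot := {z : M | P z /\ rep z = z}.

Definition quot_of {z : M} (hz : P z) : quot := exist _ (rep z) (conj (rep_dom hz) (rep_idem hz)).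

Lemma quot_eq (x y : quot) : proj1_sig x = proj1_sig y -> x = y.
Proof. destruct x, y; simpl. intro e. apply subset_eq_compat. exact e. Qed.

Lemma quot_of_congr {z z'} (hz : P z) (hz' : P z') : E z z' -> quot_of hz = quot_of hz'.
Proof. intro e. apply quot_eq. simpl. apply rep_congr, e. Qed.

Lemma quot_dom (x : quot) : P (proj1_sig x).
Proof. exact (proj1 (proj2_sig x)). Qed.

Definition quot_mul (x y : quot) : quot := quot_of (P_mul (quot_dom x) (quot_dom y)).
Definition quot_one : quot := quot_of P_one.

Lemma quot_mulA x y z : quot_mul x (quot_mul y z) = quot_mul (quot_mul x y) z.
Proof.
  apply quot_eq, rep_congr. simpl.
  apply (E_trans (proj1_sig x ** (proj1_sig y ** proj1_sig z))).
  - apply E_congr; [apply E_refl, quot_dom | apply rep_spec, P_mul; apply quot_dom].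
  - rewrite mopA. apply E_congr; [apply E_sym, rep_spec, P_mul; apply quot_dom |
      apply E_refl, quot_dom].
Qed.

Lemma quot_mul1l x : quot_mul quot_one x = x.
Proof.
  apply quot_eq. destruct x as [x [hx ex]]. simpl. rewrite <- ex at 2. apply rep_congr.
  rewrite <- (mop1l x) at 2. apply E_congr; [apply rep_spec, P_one | apply E_refl, hx].
Qed.

Lemma quot_mul1r x : quot_mul x quot_one = x.
Proof.
  apply quot_eq. destruct x as [x [hx ex]]. simpl. rewrite <- ex at 2. apply rep_congr.
  rewrite <- (mop1r x) at 2. apply E_congr; [apply E_refl, hx | apply rep_spec, P_one].
Qed.

Definition quot_monoid : monoid := Monoid quot_mul quot_one quot_mulA quot_mul1l quot_mul1r.

(* The projection is extended by [1] outside of [P]. *)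
Definition quot_map (z : M) : quot_monoid :=
  match excluded_middle_informative (P z) with
  | left hz => quot_of hz
  | right _ => quot_one
  end.

Lemma quot_map_dom {z} (hz : P z) : quot_map z = quot_of hz.
Proof.
  unfold quot_map. destruct (excluded_middle_informative (P z)) as [h | h].
  - apply quot_eq. reflexivity.
  - contradiction.
Qed.

Lemma quot_map_one : quot_map mone = mone.
Proof. rewrite (quot_map_dom P_one). reflexivity. Qed.

Lemma quot_map_mul {x y} : P x -> P y -> quot_map (x ** y) = quot_map x ** quot_map y.
Proof.
  intros hx hy. rewrite (quot_map_dom (P_mul hx hy)), (quot_map_dom hx), (quot_map_dom hy).
  apply quot_of_congr. simpl. apply E_congr; apply E_sym, rep_spec; assumption.
Qed.

Lemma quot_map_congr {x y} : E x y -> quot_map x = quot_map y.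
Proof.
  intro e. rewrite (quot_map_dom (E_dom e)), (quot_map_dom (E_dom (E_sym e))).
  apply quot_of_congr, e.
Qed.

Lemma quot_map_inj {x y} : P x -> P y -> quot_map x = quot_map y -> E x y.
Proof.
  intros hx hy e. rewrite (quot_map_dom hx), (quot_map_dom hy) in e.
  apply (f_equal (@proj1_sig _ _)) in e. simpl in e.
  apply E_trans with (rep x); [apply E_sym, rep_spec, hx |]. rewrite e. apply rep_spec, hy.
Qed.

Lemma quot_map_surj (q : quot_monoid) : exists z, P z /\ quot_map z = q.
Proof.
  destruct q as [z [hz ez]]. exists z. split; [exact hz |].
  rewrite (quot_map_dom hz). apply quot_eq. exact ez.
Qed.

Lemma quot_monoid_finite {B : Type} (f : M -> B) (lB : list B) :
  (forall z, P z -> In (f z) lB) -> (forall x y, P x -> P y -> f x = f y -> E x y) ->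
  finite_monoid quot_monoid.
Proof.
  intros hf hfE. destruct (finite_image_representatives P f lB hf) as [reps [hrP hreps]].
  exists (map quot_map reps). intro q.
  destruct (quot_map_surj q) as [z [hz <-]]. destruct (hreps z hz) as [r [hin e]].
  apply in_map_iff. exists r. split; [|exact hin].
  apply quot_map_congr, E_sym, hfE; auto.
Qed.

End Quotient.

Section Forward.
Context {M : monoid} (a : M) {N : monoid} (f : M -> N).
Hypothesis hf : monoid_hom f.

Definition translate_ker (s t : M) : Prop :=
  Stab (Hclass a) s /\ Stab (Hclass a) t /\ f (a ** s) = f (a ** t).

Lemma translate_ker_congruence : submonoid_congruence (Stab (Hclass a)) translate_ker.
Proof.
  destruct hf as [_ f_mul]. split.
  - apply Stab_one.
  - intros; apply Stab_mul; assumption.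
  - intros x hx. exact (conj hx (conj hx eq_refl)).
  - intros x y [hx [hy e]]. exact (conj hy (conj hx (eq_sym e))).
  - intros x y z [hx [_ e1]] [_ [hz e2]]. exact (conj hx (conj hz (eq_trans e1 e2))).
  - intros x y [hx _]. exact hx.
  - intros x y z w [hx [hy e1]] [hz [hw e2]].
    split; [apply Stab_mul; assumption | split; [apply Stab_mul; assumption |]].
    (* [a y] lies in the H-class of [a], hence [a y = p a] *)
    assert (hay : Hclass a (a ** y)) by (apply Stab_mulr; [assumption | apply Hclass_refl]).
    apply Hclass_iff in hay as [_ [[p ep] _]].
    rewrite !mopA, (f_mul (a ** x) z), e1, <- (f_mul (a ** y) z), ep, <- !mopA, !(f_mul p), e2.
    reflexivity.
Qed.

Lemma translate_ker_left_inverse {s} :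
  Stab (Hclass a) s -> exists t, Stab (Hclass a) t /\ translate_ker (t ** s) mone.
Proof.
  intro hs. destruct (proj2 (hs a) (Hclass_refl a)) as [h [hh eh]].
  destruct (Hclass_stab_decomp a hh) as [t [ht ->]]. exists t.
  split; [exact ht |]. split; [apply Stab_mul; assumption | split; [apply Stab_one |]].
  rewrite mopA, <- eh, mop1r. reflexivity.
Qed.

End Forward.

Lemma residually_finite_schutz (M : monoid) :
  residually_finite_monoid M -> forall a : M, schutz_residually_finite (Hclass a).
Proof.
  intros rf a x y hx hy hxy.
  assert (ne : a ** x <> a ** y) by (intro e; apply hxy, schsigma_of_eq; assumption).
  destruct (rf _ _ ne) as [N [f [[lN hN] [hf fne]]]].
  pose (hE := translate_ker_congruence a f hf).
  exists (quot_monoid hE), (quot_map hE). split; [|split; [|split]].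
  - apply (quot_monoid_finite hE (fun s => f (a ** s)) lN).
    + intros; apply hN.
    + intros s t hs ht e. exact (conj hs (conj ht e)).
  - apply left_invertible_is_group. intro q.
    destruct (quot_map_surj hE q) as [s [hs <-]].
    destruct (translate_ker_left_inverse a f hs) as [t [ht hts]].
    exists (quot_map hE t).
    rewrite <- (quot_map_mul hE ht hs), <- (quot_map_one hE). apply (quot_map_congr hE hts).
  - split; [apply quot_map_one | split].
    + intros s t hs ht. apply (quot_map_mul hE hs ht).
    + intros s t [hs [ht e]]. apply (quot_map_congr hE).
      split; [exact hs | split; [exact ht |]]. rewrite (e a (Hclass_refl a)). reflexivity.
  - intro e. apply (quot_map_inj hE hx hy) in e as [_ [_ e]]. contradiction.
Qed.

Section Converse.
Context {M : monoid} (a : M) {G : monoid} (psi : M -> G).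
Hypothesis hpsi : schutz_hom (Hclass a) psi.
Local Notation H := (Hclass a).

(* The choice of [g] is irrelevant since [psi] is constant on [schsigma]-classes. *)
Definition psi_ext (z : M) : option G :=
  match excluded_middle_informative (exists g, Stab H g /\ z = a ** g) with
  | left e => Some (psi (proj1_sig (constructive_indefinite_description _ e)))
  | right _ => None
  end.

Lemma psi_ext_stab {g} : Stab H g -> psi_ext (a ** g) = Some (psi g).
Proof.
  intro hg. unfold psi_ext. destruct (excluded_middle_informative _) as [e | n].
  - destruct (constructive_indefinite_description _ e) as [g' [hg' eg']]; simpl.
    f_equal. apply hpsi, schsigma_of_eq; auto.
  - exfalso. apply n. eauto.
Qed.

Lemma psi_ext_out {z} : ~ H z -> psi_ext z = None.
Proof.
  intro hz. unfold psi_ext. destruct (excluded_middle_informative _) as [[g [hg ->]] | n].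
  - exfalso. apply hz, Stab_mulr; [exact hg | apply Hclass_refl].
  - reflexivity.
Qed.

Lemma psi_ext_base : psi_ext a = Some (psi mone).
Proof. rewrite <- (psi_ext_stab (Stab_one a)), mop1r. reflexivity. Qed.

Lemma psi_ext_mulr c g : Stab H g -> (H (c ** g) -> H c) ->
  psi_ext (c ** g) = option_map (fun x => x ** psi g) (psi_ext c).
Proof.
  intros hg himp. destruct (classic (H c)) as [hc | hc].
  - destruct (Hclass_stab_decomp a hc) as [k [hk ->]].
    rewrite <- mopA, !psi_ext_stab; [simpl | assumption | apply Stab_mul; assumption].
    destruct hpsi as [_ [psi_mul _]]. rewrite psi_mul; auto.
  - rewrite !psi_ext_out; auto.
Qed.

(* The witness satisfies [l = m g]. *)
Lemma psi_ext_translate {l m} : L_eq l a -> L_eq m a -> R_eq l m ->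
  exists g, Stab H g /\ forall t, L_eq (t ** l) l ->
    psi_ext (t ** l) = option_map (fun x => x ** psi g) (psi_ext (t ** m)).
Proof.
  intros hla hma hlm.
  pose proof hma as [[p ep] [q eq]]. pose proof hlm as [[c ec] [d ed]].
  assert (hql : H (q ** l)).
  { apply Hclass_iff. split.
    - rewrite eq. apply R_eq_mull, hlm.
    - apply L_eq_trans with l; [|exact hla]. rewrite ec, mopA, <- eq.
      apply L_eq_mulr, L_eq_sym, hma. }
  destruct (Hclass_stab_decomp a hql) as [g [hg eg]].
  assert (elm : l = m ** g).
  { transitivity (p ** (q ** l)).
    - rewrite ec, (mopA q m c), <- eq, mopA, <- ep. reflexivity.
    - rewrite eg, mopA, <- ep. reflexivity. }
  exists g. split; [exact hg |]. intros t htl.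
  rewrite elm at 1. rewrite mopA. apply psi_ext_mulr; [exact hg |].
  rewrite <- mopA, <- elm. intro htl_a. apply Hclass_iff in htl_a as [hR _].
  apply Hclass_iff. split.
  - apply R_eq_trans with (t ** l); [apply R_eq_mull, R_eq_sym, hlm | exact hR].
  - apply L_eq_trans with m; [|exact hma]. rewrite ed, mopA. apply L_eq_mulr, htl.
Qed.

Variable lR : list (M -> Prop).
Hypothesis hlR : forall I, right_ideal I -> exists J, In J lR /\ subset_eq I J.

(* A generator, in the L-class of [a], of the right ideal [K] (if there is one). *)
Definition right_rep (K : M -> Prop) : M :=
  epsilon (inhabits a) (fun m => L_eq m a /\ subset_eq (right_principal m) K).

Lemma right_rep_spec {l K} : L_eq l a -> subset_eq (right_principal l) K ->
  L_eq (right_rep K) a /\ R_eq l (right_rep K).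
Proof.
  intros hla hlK.
  destruct (epsilon_spec (inhabits a) (fun m => L_eq m a /\ subset_eq (right_principal m) K))
    as [hma hmK]; [eauto |].
  split; [exact hma |]. apply greenR_iff. intro z. rewrite (hlK z), (hmK z). reflexivity.
Qed.

Lemma psi_ext_determined b t1 t2 w : L_eq (t1 ** b) b -> L_eq (t2 ** b) b ->
  (forall K, In K lR -> psi_ext (t1 ** right_rep K) = psi_ext (t2 ** right_rep K)) ->
  psi_ext (t1 ** (b ** w)) = psi_ext (t2 ** (b ** w)).
Proof.
  intros h1 h2 hK. set (l := b ** w).
  assert (hl1 : L_eq (t1 ** l) l) by (unfold l; rewrite mopA; apply L_eq_mulr, h1).
  assert (hl2 : L_eq (t2 ** l) l) by (unfold l; rewrite mopA; apply L_eq_mulr, h2).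
  destruct (classic (L_eq l a)) as [hla | hla].
  - destruct (hlR _ (right_principal_ideal l)) as [K [hin hlK]].
    destruct (right_rep_spec hla hlK) as [hma hlm].
    destruct (psi_ext_translate hla hma hlm) as [g [_ hg]].
    rewrite (hg t1 hl1), (hg t2 hl2), (hK K hin). reflexivity.
  - assert (out : forall t, L_eq (t ** l) l -> ~ H (t ** l)).
    { intros t htl htla. apply hla, L_eq_trans with (t ** l);
        [apply L_eq_sym, htl | apply Hclass_iff, htla]. }
    rewrite !psi_ext_out; auto.
Qed.

Variable lL : list (M -> Prop).
Hypothesis hlL : forall I, left_ideal I -> exists J, In J lL /\ subset_eq I J.

Definition left_ideal_of (u : M) : M -> Prop :=
  epsilon (inhabits (fun _ => True)) (fun J => In J lL /\ subset_eq (left_principal u) J).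

Lemma left_ideal_of_spec u :
  In (left_ideal_of u) lL /\ subset_eq (left_principal u) (left_ideal_of u).
Proof. unfold left_ideal_of. apply epsilon_spec, hlL, left_principal_ideal. Qed.

Definition generator (J : M -> Prop) : M :=
  epsilon (inhabits a) (fun z => subset_eq (left_principal z) J).

Lemma L_eq_generator u : L_eq u (generator (left_ideal_of u)).
Proof.
  apply greenL_iff. intro z. rewrite (proj2 (left_ideal_of_spec u) z).
  symmetry. apply (epsilon_spec (inhabits a) (fun z => subset_eq (left_principal z) _)).
  exists u. apply left_ideal_of_spec.
Qed.

Definition cofactor (u : M) : M :=
  epsilon (inhabits a) (fun t => u = t ** generator (left_ideal_of u)).

Lemma cofactor_spec u : u = cofactor u ** generator (left_ideal_of u).
Proof. unfold cofactor. apply epsilon_spec, L_eq_generator. Qed.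

Definition signature (u : M) : (M -> Prop) * list (option G) :=
  (left_ideal_of u, map (fun K => psi_ext (cofactor u ** right_rep K)) lR).

Lemma signature_eq {u v} : signature u = signature v ->
  forall w, psi_ext (u ** w) = psi_ext (v ** w).
Proof.
  intros e w. injection e as eJ emap.
  assert (hu : L_eq (cofactor u ** generator (left_ideal_of u)) (generator (left_ideal_of u)))
    by (rewrite <- cofactor_spec; apply L_eq_generator).
  assert (hv : L_eq (cofactor v ** generator (left_ideal_of u)) (generator (left_ideal_of u)))
    by (rewrite eJ, <- cofactor_spec; apply L_eq_generator).
  rewrite (cofactor_spec u) at 1. rewrite (cofactor_spec v) at 1. rewrite <- eJ, <- !mopA.
  apply psi_ext_determined; [exact hu | exact hv |].
  apply map_ext_in_iff. exact emap.
Qed.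

Variable lG : list G.
Hypothesis hlG : forall g, In g lG.

Definition signatures : list ((M -> Prop) * list (option G)) :=
  list_prod lL (lists_of_length (length lR) (None :: map Some lG)).

Lemma signature_in u : In (signature u) signatures.
Proof.
  apply in_prod; [apply left_ideal_of_spec |].
  rewrite <- (length_map (fun K => psi_ext (cofactor u ** right_rep K)) lR).
  apply lists_of_length_complete. intros [g |] _; [right; apply in_map, hlG | left; reflexivity].
Qed.

Definition syntactic_eq (u v : M) : Prop :=
  forall p w, psi_ext (p ** u ** w) = psi_ext (p ** v ** w).

Lemma syntactic_congruence : submonoid_congruence (fun _ => True) syntactic_eq.
Proof.
  split; try (intros; exact I).
  - intros x _ p w. reflexivity.
  - intros x y h p w. symmetry. apply h.
  - intros x y z h1 h2 p w. rewrite h1. apply h2.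
  - intros x y z w h1 h2 p q.
    transitivity (psi_ext (p ** x ** (z ** q))); [f_equal; monoid_assoc |].
    rewrite h1, mopA, h2. f_equal. monoid_assoc.
Qed.

(* Two-sided contexts [p _ w] reduce to right contexts [r _ w], [r] ranging over
   representatives of the finitely many signatures. *)
Lemma syntactic_quotient_finite : finite_monoid (quot_monoid syntactic_congruence).
Proof.
  destruct (finite_image_representatives (fun _ => True) signature signatures)
    as [reps [_ hreps]]; [intros; apply signature_in |].
  apply (quot_monoid_finite syntactic_congruence (fun u => map (fun r => signature (r ** u)) reps)
           (lists_of_length (length reps) signatures)).
  - intros u _. rewrite <- (length_map (fun r => signature (r ** u)) reps).
    apply lists_of_length_complete. intros s hs. apply in_map_iff in hs as [r [<- _]].
    apply signature_in.
  - intros u v _ _ e p w. destruct (hreps p I) as [r [hin er]].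
    rewrite <- !(mopA p), !(signature_eq er), !mopA.
    apply signature_eq. exact (proj1 map_ext_in_iff e r hin).
Qed.

Lemma psi_ext_separated x y : psi_ext x <> psi_ext y ->
  exists (N : monoid) (f : M -> N), finite_monoid N /\ monoid_hom f /\ f x <> f y.
Proof.
  intro ne. exists (quot_monoid syntactic_congruence), (quot_map syntactic_congruence).
  split; [apply syntactic_quotient_finite | split; [split |]].
  - apply quot_map_one.
  - intros u v. apply quot_map_mul; exact I.
  - intro e. apply (quot_map_inj syntactic_congruence I I) in e.
    apply ne. specialize (e mone mone). rewrite !mop1l, !mop1r in e. exact e.
Qed.

End Converse.

Definition unit_monoid : monoid.
Proof.
  refine (Monoid (fun _ _ : unit => tt) tt _ _ _); intros; try destruct x; reflexivity.
Defined.

Theorem mainTheorem20 (M : monoid)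
  (hL : finitely_many (@left_ideal M))
  (hR : finitely_many (@right_ideal M)) :
  residually_finite_monoid M <->
  (forall a : M, schutz_residually_finite (Hclass a)).
Proof.
  split; [apply residually_finite_schutz |].
  intros hs x y ne. destruct hL as [lL hlL], hR as [lR hlR].
  destruct (classic (Hclass x y)) as [hy | hy].
  - destruct (Hclass_stab_decomp x hy) as [s [hst ->]].
    assert (hns : ~ schsigma (Hclass x) mone s).
    { intros [_ [_ h]]. apply ne. rewrite <- (h x (Hclass_refl x)), mop1r. reflexivity. }
    destruct (hs x mone s (Stab_one x) hst hns) as [G [psi [[lG hlG] [_ [hpsi hne]]]]].
    apply (psi_ext_separated x psi hpsi lR hlR lL hlL lG hlG).
    rewrite psi_ext_base, (psi_ext_stab x psi hpsi hst); [congruence | exact hpsi].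
  - pose (triv := fun _ : M => tt : unit_monoid).
    assert (htriv : schutz_hom (Hclass x) triv) by (repeat split).
    apply (psi_ext_separated x triv htriv lR hlR lL hlL [tt]); [intros []; left; reflexivity |].
    rewrite psi_ext_base, (psi_ext_out x triv hy); [discriminate | exact htriv].
Qed.
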